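(* Let $\{x^k\}$ be generated by Algorithm IRG with the backtracking stepsize rule and $\theta<\mu$. Assume $\rho_k\to0$, that $\{x^k\}$ has an accumulation point $\bar x$, and that $f$ satisfies the KL property at $\bar x$. Then $\bar x$ is a stationary point of $f$ and $x^k\to\bar x$ as $k\to\infty$.
   Context: Algorithm IRG (general inexact reduced gradient framework). Let $f:\mathbb R^n\to\mathbb R$ be continuously differentiable. Parameters: initial point $x^1\in\mathbb R^n$, initial radii $\varepsilon_1>0$, $r_1>0$, reduction factors $\mu,\theta\in(0,1)$, and a sequence $\{\rho_k\}$ of positive numbers. For $k=1,2,\dots$: (1) choose $g^k\in\mathbb R^n$ with $\|g^k-\nabla f(x^k)\|\le\min\{\varepsilon_k,\rho_k\}$; (2) if $\|g^k\|\le r_k+\varepsilon_k$, set $r_{k+1}=\mu r_k$, $\varepsilon_{k+1}=\theta\varepsilon_k$, $d^k=0$; otherwise set $r_{k+1}=r_k$, $\varepsilon_{k+1}=\varepsilon_k$ and $d^k=-\frac{\|g^k\|-\varepsilon_k}{\|g^k\|}g^k$; (3) choose a stepsize $t_k>0$ by some rule; (4) set $x^{k+1}=x^k+t_kd^k$. Backtracking stepsize rule: fix $\beta,\gamma,\tau\in(0,1)$; if $d^k=0$ set $t_k=\tau$; otherwise $t_k=\max\{t\in\{1,\gamma,\gamma^2,\dots\}: f(x^k+td^k)\le f(x^k)-\beta t\|d^k\|^2\}$. KL property: $f$ satisfies the KL property at $\bar x$ if there exist $\eta>0$, a neighborhood $U$ of $\bar x$, and a nondecreasing function $\psi:(0,\eta)\to(0,\infty)$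 such that $1/\psi$ is integrable over $(0,\eta)$ and $\|\nabla f(x)\|\ge\psi(f(x)-f(\bar x))$ for all $x\in U$ with $f(\bar x)<f(x)<f(\bar x)+\eta$. *)

(* R^n is represented by row vectors 'rV[R]_n. *)
From HB Require Import structures.
From mathcomp Require Import all_boot all_order all_algebra.
From mathcomp Require Import all_classical all_reals all_analysis.
Set Implicit Arguments. Unset Strict Implicit. Unset Printing Implicit Defensive.
Import Order.TTheory GRing.Theory Num.Theory.
Import numFieldNormedType.Exports.
Local Open Scope classical_set_scope.
Local Open Scope ring_scope.

(* Euclidean norm on R^n (the library's norm on matrices is the max-norm). *)
Definition enorm {R : realType} {n : nat} (v : 'rV[R]_n) : R :=
  Num.sqrt (\sum_(i < n) v 0 i ^+ 2).

Definition grad {R : realType} {n : nat} (f : 'rV[R]_n -> R) (x : 'rV[R]_n)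
  : 'rV[R]_n := \row_(i < n) ('D_(delta_mx 0 i) f x).

Definition C1 {R : realType} {n : nat} (f : 'rV[R]_n -> R) : Prop :=
  (forall x, differentiable f x) /\ continuous (grad f).

Definition KL_at {R : realType} {n : nat} (f : 'rV[R]_n -> R) (xbar : 'rV[R]_n)
  : Prop :=
  exists (eta : R) (U : set 'rV[R]_n) (psi : R -> R),
    [/\ 0 < eta, nbhs xbar U &
     [/\ {in (`]0, eta[) &, {homo psi : s t / s <= t}},
        (forall t, 0 < t < eta -> 0 < psi t),
        (lebesgue_measure).-integrable (`]0, eta[)
            (fun t => ((psi t)^-1)%:E) &
        (forall x, U x -> f xbar < f x < f xbar + eta ->
           psi (f x - f xbar) <= enorm (grad f x))]].

Definition armijo {R : realType} {n : nat} (f : 'rV[R]_n -> R) (beta : R)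
  (x d : 'rV[R]_n) (t : R) : Prop :=
  f (x + t *: d) <= f x - beta * t * (enorm d ^+ 2).

(* Indices are shifted: index 0 here is k = 1
   in the paper (x 0 = x^1, eps 0 = eps_1, r 0 = r_1). *)
Definition IRG_backtracking {R : realType} {n : nat} (f : 'rV[R]_n -> R)
  (mu theta beta gamma tau : R) (rho : nat -> R)
  (x g d : nat -> 'rV[R]_n) (eps r t : nat -> R) : Prop :=
  [/\ 0 < eps 0, 0 < r 0 &
   forall k,
   [/\ enorm (g k - grad f (x k)) <= Num.min (eps k) (rho k),
       (if enorm (g k) <= r k + eps k then
          [/\ r k.+1 = mu * r k, eps k.+1 = theta * eps k & d k = 0]
        else
          [/\ r k.+1 = r k, eps k.+1 = eps k &
              d k = - ((enorm (g k) - eps k) / enorm (g k)) *: g k]),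
       (if d k == 0 then t k = tau
        else exists j : nat,
          [/\ t k = gamma ^+ j, armijo f beta (x k) (d k) (gamma ^+ j) &
              forall i, (i < j)%N -> ~ armijo f beta (x k) (d k) (gamma ^+ i)]) &
       x k.+1 = x k + t k *: d k]].

Definition accumulation_point {R : realType} {n : nat} (x : nat -> 'rV[R]_n)
  (xbar : 'rV[R]_n) : Prop :=
  forall U, nbhs xbar U -> forall N, exists k, (N <= k)%N /\ U (x k).

(* Every step decreases f by at least beta t_k |d_k|^2, and since theta < mu
   the ratio eps_k / r_k stays bounded, so |grad f(x_k)| <= c |d_k| on descent
   steps.  Near xbar the KL inequality then bounds the step length
   |x_{k+1} - x_k| by c / beta times the decrease of phi(f(x_k) - f(xbar)),
   phi being the desingularizing function; these bounds telescope, so once an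
   iterate is close enough to xbar with f-value close to f(xbar), all later
   iterates stay in a small ball around xbar, whence x_k -> xbar.
   Stationarity: if null steps occur infinitely often, r_k -> 0 geometrically
   and |grad f(x_k)| <= c r_k at those steps.  Otherwise r_k is eventually
   constant, the stepsizes t_k tend to 0, and the failed Armijo test at
   t_k / gamma forces grad f to vary by (1 - beta) r_k on a vanishing segment
   at x_k, contradicting the continuity of grad f at xbar. *)

From HB Require Import structures.
From mathcomp Require Import all_boot all_order all_algebra.
From mathcomp Require Import all_classical all_reals all_analysis.
From mathcomp Require Import ring lra.
Set Implicit Arguments. Unset Strict Implicit. Unset Printing Implicit Defensive.
Import Order.TTheory GRing.Theory Num.Theory.
Import numFieldNormedType.Exports.
Local Open Scope classical_set_scope.
Local Open Scope ring_scope.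

Section EuclideanNorm.
Context {R : realType} {n : nat}.
Implicit Types u v w : 'rV[R]_n.

Definition dot u v : R := \sum_(i < n) u 0 i * v 0 i.

Lemma dotC u v : dot u v = dot v u.
Proof. by apply: eq_bigr => i _; rewrite mulrC. Qed.

Lemma dotDl u v w : dot (u + v) w = dot u w + dot v w.
Proof. by rewrite /dot -big_split; apply: eq_bigr => i _; rewrite mxE mulrDl. Qed.

Lemma dotZl a u w : dot (a *: u) w = a * dot u w.
Proof. by rewrite /dot mulr_sumr; apply: eq_bigr => i _; rewrite mxE mulrA. Qed.

Lemma dotNl u w : dot (- u) w = - dot u w.
Proof. by rewrite -scaleN1r dotZl mulN1r. Qed.

Lemma dotBl u v w : dot (u - v) w = dot u w - dot v w.
Proof. by rewrite dotDl dotNl. Qed.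

Lemma dotDr u v w : dot w (u + v) = dot w u + dot w v.
Proof. by rewrite dotC dotDl !(dotC w). Qed.

Lemma dotZr a u w : dot w (a *: u) = a * dot w u.
Proof. by rewrite dotC dotZl dotC. Qed.

Lemma dotBr u v w : dot w (u - v) = dot w u - dot w v.
Proof. by rewrite !(dotC w) dotBl. Qed.

Lemma dot0l u : dot 0 u = 0.
Proof. by rewrite /dot big1 // => i _; rewrite mxE mul0r. Qed.

Lemma dotvv_ge0 u : 0 <= dot u u.
Proof. by apply: sumr_ge0 => i _; rewrite -expr2 sqr_ge0. Qed.

Lemma dotvv_eq0 u : dot u u = 0 -> u = 0.
Proof.
move=> /eqP; rewrite psumr_eq0 => [/allP uu0|i _]; last by rewrite -expr2 sqr_ge0.
apply/rowP => i; have /= := uu0 i (mem_index_enum i).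
by rewrite -expr2 sqrf_eq0 mxE => /eqP.
Qed.

Lemma enormE u : enorm u = Num.sqrt (dot u u).
Proof. by congr Num.sqrt; apply: eq_bigr => i _; rewrite expr2. Qed.

Lemma enorm_ge0 u : 0 <= enorm u.
Proof. exact: sqrtr_ge0. Qed.

Lemma sqr_enorm u : enorm u ^+ 2 = dot u u.
Proof. by rewrite enormE sqr_sqrtr // dotvv_ge0. Qed.

Lemma enorm0 : enorm (0 : 'rV[R]_n) = 0.
Proof. by rewrite enormE dot0l sqrtr0. Qed.

Lemma enorm_eq0 u : enorm u = 0 -> u = 0.
Proof. by move=> u0; apply: dotvv_eq0; rewrite -sqr_enorm u0 expr0n. Qed.

Lemma dot_le_enorm u v : dot u v <= enorm u * enorm v.
Proof.
have [v0|] := eqVneq (dot v v) 0.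
  by rewrite (dotvv_eq0 v0) dotC dot0l enorm0 mulr0.
move=> vv_neq0; have vv_gt0 : 0 < dot v v by rewrite lt_def vv_neq0 dotvv_ge0.
set A := dot u u; set B := dot u v; set C := dot v v.
(* the squared norm of the projection residual u - (B / C) v *)
have : 0 <= A - B ^+ 2 / C.
  have := dotvv_ge0 (u - (B / C) *: v).
  rewrite !(dotBl, dotBr, dotZl, dotZr) -/A -/B -/C (dotC v u) -/B.
  suff -> : A - B / C * B - B / C * (B - B / C * C) = A - B ^+ 2 / C by [].
  by field; rewrite gt_eqF.
rewrite subr_ge0 ler_pdivrMr // => BAC.
have [B_lt0|B_ge0] := ltP B 0.
  by apply: le_trans (ltW B_lt0) _; rewrite mulr_ge0 ?enorm_ge0.
rewrite -(@ler_pXn2r _ 2) // ?nnegrE ?mulr_ge0 ?enorm_ge0 //.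
by rewrite exprMn !sqr_enorm.
Qed.

Lemma enormZ a u : enorm (a *: u) = `|a| * enorm u.
Proof.
by rewrite !enormE dotZl dotZr mulrA -expr2 sqrtrM ?sqr_ge0 // sqrtr_sqr.
Qed.

Lemma enormN u : enorm (- u) = enorm u.
Proof. by rewrite -scaleN1r enormZ normrN normr1 mul1r. Qed.

Lemma enorm_distC u v : enorm (u - v) = enorm (v - u).
Proof. by rewrite -enormN opprB. Qed.

Lemma ler_enormD u v : enorm (u + v) <= enorm u + enorm v.
Proof.
rewrite -(@ler_pXn2r _ 2) // ?nnegrE ?addr_ge0 ?enorm_ge0 //.
rewrite sqr_enorm sqrrD !sqr_enorm dotDl !dotDr (dotC v u).
by have := dot_le_enorm u v; lra.
Qed.

Lemma ler_enorm_distD u v w : enorm (u - w) <= enorm (u - v) + enorm (v - w).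
Proof. by have := ler_enormD (u - v) (v - w); rewrite addrA subrK. Qed.

Lemma mxnorm_le_enorm u : `|u| <= enorm u.
Proof.
rewrite [`|u|]mx_normrE; apply/bigmax_leP; split=> [|[i j] _ /=].
  exact: enorm_ge0.
rewrite (ord1 i) /enorm -sqrtr_sqr; apply: ler_wsqrtr.
by rewrite (bigD1 j) //= lerDl sumr_ge0 // => k _; rewrite sqr_ge0.
Qed.

Lemma enorm_le_mxnorm u : enorm u <= Num.sqrt n%:R * `|u|.
Proof.
rewrite -[X in _ * X]ger0_norm // -sqrtr_sqr -sqrtrM ?ler0n //.
apply: ler_wsqrtr; rewrite -[n in n%:R]card_ord -sumr_const mulr_suml.
apply: ler_sum => i _; rewrite mul1r -real_normK ?num_real //.
rewrite lerXn2r // ?nnegrE // [`|u|]mx_normrE.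
by apply/bigmax_geP; right; exists (0, i).
Qed.

Lemma enorm_lt_mxnorm u e : `|u| < e / (Num.sqrt n%:R + 1) -> enorm u < e.
Proof.
have c_gt0 : 0 < Num.sqrt (n%:R : R) + 1 by rewrite ltr_wpDl ?sqrtr_ge0.
rewrite ltr_pdivlMr // => ue; apply: le_lt_trans (enorm_le_mxnorm u) _.
by apply: le_lt_trans ue; rewrite mulrC ler_wpM2l // lerDl.
Qed.

End EuclideanNorm.

Section EuclideanTopology.
Context {R : realType} {n : nat}.
Implicit Types y z : 'rV[R]_n.

Lemma nbhs_enorm_ball z (P : set 'rV[R]_n) : nbhs z P ->
  exists2 del, 0 < del & forall y, enorm (y - z) < del -> P y.
Proof.
move=> /nbhs_ballP [e e0 zeP]; exists e => // y yz; apply: zeP.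
by rewrite -ball_normE /= (le_lt_trans (mxnorm_le_enorm _)) // enorm_distC.
Qed.

Lemma enorm_ball_nbhs z (c : R) : 0 < c -> nbhs z [set y | enorm (y - z) < c].
Proof.
move=> c0; apply/nbhs_ballP; exists (c / (Num.sqrt n%:R + 1)).
  by rewrite /= divr_gt0 // ltr_wpDl ?sqrtr_ge0.
by move=> y; rewrite -ball_normE /= => zy; rewrite enorm_lt_mxnorm // -normrN opprB.
Qed.

Lemma cvg_enorm_lt {T : Type} (F : set_system T) {FF : Filter F}
    (u : T -> 'rV[R]_n) z :
  u @ F --> z -> forall e, 0 < e -> \forall s \near F, enorm (u s - z) < e.
Proof.
move=> /cvgrPdist_lt uz e e0.
have /uz : 0 < e / (Num.sqrt n%:R + 1) by rewrite divr_gt0 // ltr_wpDl ?sqrtr_ge0.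
by apply: filterS => s zs; rewrite enorm_lt_mxnorm // -normrN opprB.
Qed.

End EuclideanTopology.

Section LineDerivative.
Context {R : realType} {n : nat} (f : 'rV[R]_n -> R).
Implicit Types x d : 'rV[R]_n.

Lemma derive_grad_dot x d : differentiable f x -> 'D_d f x = dot (grad f x) d.
Proof.
move=> dfx; rewrite deriveE // {1}(row_sum_delta d) linear_sum.
by apply: eq_bigr => i _; rewrite linearZ /= /grad mxE deriveE // mulrC.
Qed.

Lemma is_derive_line x d (s : R) : differentiable f (x + s *: d) ->
  is_derive s 1 (fun s => f (x + s *: d)) (dot (grad f (x + s *: d)) d).
Proof.
move=> dfx.
have quotE : (fun h : R => h^-1 *: (f (x + (h *: 1 + s) *: d) - f (x + s *: d))) =
             (fun h : R => h^-1 *: (f (h *: d + (x + s *: d)) - f (x + s *: d))).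
  apply/funext => h; congr (_ *: (f _ - _)).
  by rewrite scalerDl -[h%:A]/(h * 1) mulr1 addrCA addrA.
split; first by rewrite /derivable /= quotE; exact: diff_derivable.
by rewrite /derive /= quotE -derive_grad_dot.
Qed.

Lemma mvt_line x d (s : R) : (forall y, differentiable f y) -> 0 < s ->
  exists2 u, 0 < u < s & f (x + s *: d) - f x = s * dot (grad f (x + u *: d)) d.
Proof.
move=> df s0.
have fd (u : R) := is_derive_line (df (x + u *: d)).
have cont : {within `[0, s], continuous (fun s => f (x + s *: d))}.
  apply: continuous_subspaceT => u; apply: differentiable_continuous.
  by apply/derivable1_diffP; case: (fd u).
have [u u_in] := MVT s0 (fun u _ => fd u) cont.
by rewrite scale0r addr0 subr0 mulrC => ->; exists u; rewrite in_itv /= in u_in.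
Qed.

Lemma not_armijo_grad_gap (beta : R) x d (s : R) :
  (forall y, differentiable f y) -> 0 < s -> 0 < enorm d ->
  dot (grad f x) d <= - enorm d ^+ 2 -> ~ armijo f beta x d s ->
  exists2 u, 0 < u < s &
    (1 - beta) * enorm d < enorm (grad f (x + u *: d) - grad f x).
Proof.
move=> df s0 d0 descent /negP; rewrite -ltNge => fail.
have [u u_in mvt] := mvt_line x d df s0; exists u => //.
have : - beta * enorm d ^+ 2 < dot (grad f (x + u *: d)) d.
  by rewrite -(ltr_pM2l s0) -mvt; move: fail; lra.
move: (dot_le_enorm (grad f (x + u *: d) - grad f x) d); rewrite dotBl.
rewrite -(ltr_pM2r d0); nra.
Qed.

End LineDerivative.

Section Desingularizer.
Context {R : realType} (psi : R -> R) (eta : R).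
Hypotheses (psi_nondecr : {in `]0, eta[ &, {homo psi : s t / s <= t}})
  (psi_gt0 : forall t, 0 < t < eta -> 0 < psi t)
  (inv_psi_int : lebesgue_measure.-integrable `]0, eta[ (fun t => ((psi t)^-1)%:E)).

Definition desing (s : R) : R := \int[lebesgue_measure]_(t in `]0, s]) (psi t)^-1.

Let integrable_inv_psi s : s < eta ->
  lebesgue_measure.-integrable `]0, s] (fun t => ((psi t)^-1)%:E).
Proof.
move=> s_lt; apply: integrableS inv_psi_int => // t /=.
by rewrite !in_itv /= => /andP[-> ts]; rewrite (le_lt_trans ts).
Qed.

Lemma desing_ge0 s : s < eta -> 0 <= desing s.
Proof.
move=> s_lt; apply: Rintegral_ge0 => t; rewrite /= in_itv /= => /andP[t0 ts].
by rewrite invr_ge0 ltW // psi_gt0 // t0 (le_lt_trans ts).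
Qed.

Lemma desing_diff_ge a b : 0 <= b -> b <= a -> a < eta -> 0 < a ->
  (a - b) / psi a <= desing a - desing b.
Proof.
move=> b0 ba a_lt a0.
rewrite /desing (@Rintegral_itvB _ _ (BRight 0) (BRight a) b) ?bnd_simp //;
  last exact: integrable_inv_psi.
have itv_ba : lebesgue_measure `]b, a] = (a - b)%:E.
  have := @lebesgue_measure_itv R `]b, a]; rewrite /= lte_fin => ->.
  by case: ltgtP ba => // ->; rewrite subrr.
have -> : (a - b) / psi a = \int[lebesgue_measure]_(t in `]b, a]) (psi a)^-1.
  rewrite Rintegral_cst // mulrC [X in fine X](_ : _ = (a - b)%:E) //; exact: itv_ba.
apply: le_Rintegral => //.
- apply: measurable_bounded_integrable => //; last exact: bounded_cst.
  rewrite [X in (X < _)%E](_ : _ = (a - b)%:E) ?ltry //; exact: itv_ba.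
- apply: integrableS (integrable_inv_psi a_lt) => // t /=.
  by rewrite !in_itv /= => /andP[bt ->]; rewrite (le_lt_trans b0 bt).
- move=> t; rewrite /= in_itv /= => /andP[bt ta].
  have t0 : 0 < t := le_lt_trans b0 bt.
  have t_lt : t < eta := le_lt_trans ta a_lt.
  rewrite lef_pV2 ?posrE ?psi_gt0 ?a0 ?t0 //.
  by apply: psi_nondecr; rewrite ?in_itv /= ?a0 ?t0.
Qed.

Lemma desing_le a b : 0 <= b -> b <= a -> a < eta -> desing b <= desing a.
Proof.
move=> b0 ba a_lt; have [a0|] := ltP 0 a.
  have := desing_diff_ge b0 ba a_lt a0.
  have : 0 <= (a - b) / psi a by rewrite divr_ge0 ?subr_ge0 // ltW // psi_gt0 // a0.
  lra.
by move=> a_le0; rewrite (@le_anti _ _ b a) // ba (le_trans a_le0).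
Qed.

(* By absolute continuity of the Lebesgue integral. *)
Lemma desing_small e : 0 < e -> exists2 del, 0 < del &
  forall s, 0 <= s -> s < del -> s < eta -> desing s < e.
Proof.
move=> e0; have int_patch : lebesgue_measure.-integrable setT
    (EFin \o ((fun t => (psi t)^-1) \_ `]0, eta[)).
  by rewrite -restrict_EFin -integrable_mkcond.
have [del [del0 small]] := integral_normr_continuous int_patch e0.
exists del => // s s0 s_del s_lt.
have : (lebesgue_measure [set` `]0, s]%R] < del%:E)%E.
  have := @lebesgue_measure_itv R `]0, s]; rewrite /= => ->.
  by case: ifP; rewrite -?EFinD lte_fin ?subr0.
move=> /(small _ (measurable_itv _)); apply: le_lt_trans.
rewrite le_eqVlt; apply/orP; left; apply/eqP/eq_Rintegral => t; rewrite inE /= in_itv /= => /andP[t0 ts].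
have t_lt : t < eta := le_lt_trans ts s_lt.
rewrite patchE ifT; last by rewrite inE /= in_itv /= t0.
by rewrite gtr0_norm // invr_gt0 psi_gt0 // t0.
Qed.

End Desingularizer.

Section IRG.
Context {R : realType} {n : nat} (f : 'rV[R]_n -> R)
  (mu theta beta gamma tau : R) (rho : nat -> R)
  (x g d : nat -> 'rV[R]_n) (eps r t : nat -> R).
Hypotheses (f_C1 : C1 f) (mu01 : 0 < mu < 1) (theta01 : 0 < theta < 1)
  (theta_lt_mu : theta < mu) (beta01 : 0 < beta < 1) (gamma01 : 0 < gamma < 1)
  (tau01 : 0 < tau < 1)
  (irg : IRG_backtracking f mu theta beta gamma tau rho x g d eps r t).

Let irg_step := let: And3 _ _ step := irg in step.
Let mu_gt0 : 0 < mu. Proof. by case/andP: mu01. Qed.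
Let theta_gt0 : 0 < theta. Proof. by case/andP: theta01. Qed.
Let beta_gt0 : 0 < beta. Proof. by case/andP: beta01. Qed.
Let gamma_gt0 : 0 < gamma. Proof. by case/andP: gamma01. Qed.

Definition null_step k := enorm (g k) <= r k + eps k.

Lemma g_close k : enorm (g k - grad f (x k)) <= eps k.
Proof. by case: (irg_step k) => + _ _ _; rewrite le_min => /andP[]. Qed.

Lemma xS k : x k.+1 = x k + t k *: d k.
Proof. by case: (irg_step k). Qed.

Lemma eps_r_gt0 k : 0 < eps k /\ 0 < r k.
Proof.
case: irg => eps0 r0 _; elim: k => [//|k [epsk rk]].
by case: (irg_step k) => _; case: ifP => _ [-> -> _] _ _; rewrite ?mulr_gt0.
Qed.

Lemma eps_gt0 k : 0 < eps k. Proof. by case: (eps_r_gt0 k). Qed.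
Lemma r_gt0 k : 0 < r k. Proof. by case: (eps_r_gt0 k). Qed.

Lemma r_nonincr k m : (k <= m)%N -> r m <= r k.
Proof.
move=> /subnK <-; elim: (m - k)%N => //= i; apply: le_trans.
have rik := r_gt0 (i + k); case: (irg_step (i + k)) => _.
by case: ifP => _ [-> _ _] _ _; rewrite ?ger_pMl // ltW //; case/andP: mu01.
Qed.

(* Null steps shrink eps by theta and r by the larger factor mu. *)
Lemma eps_le_r k : eps k <= eps 0 / r 0 * r k.
Proof.
rewrite mulrAC ler_pdivlMr ?r_gt0 //; elim: k => [//|k IH].
have := eps_r_gt0 k; case: (irg_step k) => _.
case: ifP => _ [-> -> _] _ _ // [epsk rk].
have : theta * (eps k * r 0) <= mu * (eps 0 * r k).
  by apply: ler_pM => //; rewrite ?mulr_ge0 // ltW // r_gt0.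
by rewrite !mulrA [eps 0 * mu]mulrC.
Qed.

Definition c_grad := 1 + 2 * (eps 0 / r 0).

Lemma c_grad_gt0 : 0 < c_grad.
Proof.
by apply: lt_le_trans ltr01 _; rewrite lerDl mulr_ge0 // divr_ge0 // ltW // (eps_gt0, r_gt0).
Qed.

Lemma grad_le_g k : enorm (grad f (x k)) <= enorm (g k) + eps k.
Proof.
have := ler_enormD (g k) (grad f (x k) - g k); rewrite addrC subrK enorm_distC.
by have := g_close k; lra.
Qed.

Lemma null_step_facts k : null_step k ->
  [/\ d k = 0, x k.+1 = x k & enorm (grad f (x k)) <= c_grad * r k].
Proof.
rewrite /null_step => nullk; case: (irg_step k) => _; rewrite nullk => -[_ _ dk0] _ _.
split=> //; first by rewrite xS dk0 scaler0 addr0.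
have := grad_le_g k; have := eps_le_r k; move: nullk; rewrite /c_grad.
by have := r_gt0 k; nra.
Qed.

Lemma descent_step_facts k : ~~ null_step k ->
  [/\ r k.+1 = r k, enorm (d k) = enorm (g k) - eps k, r k < enorm (d k) &
      d k = - ((enorm (g k) - eps k) / enorm (g k)) *: g k].
Proof.
rewrite /null_step -ltNge => gk; case: (irg_step k) => _.
rewrite leNgt gk => -[-> _ dk] _ _; have := eps_r_gt0 k => -[epsk rk].
have dn : enorm (d k) = enorm (g k) - eps k.
  rewrite dk enormZ normrN ger0_norm ?divfK //; first by rewrite gt_eqF //; lra.
  by rewrite divr_ge0 ?enorm_ge0 //; lra.
by split=> //; lra.
Qed.

Lemma t_gt0 k : 0 < t k.
Proof.
case: (irg_step k) => _ _; case: ifP => _; first by move=> ->; case/andP: tau01.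
by move=> [j [-> _ _]] _; rewrite exprn_gt0.
Qed.

Lemma descent k : f (x k.+1) <= f (x k) - beta * t k * enorm (d k) ^+ 2.
Proof.
case: (irg_step k) => _ _; case: ifP => [/eqP dk0 _ ->|_ [j [-> armijo_j _]] ->] //.
by rewrite dk0 scaler0 addr0 enorm0 expr0n /= mulr0 subr0.
Qed.

Lemma f_nonincr k m : (k <= m)%N -> f (x m) <= f (x k).
Proof.
move=> /subnK <-; elim: (m - k)%N => //= i; apply: le_trans.
apply: le_trans (descent _) _; rewrite gerBl mulr_ge0 ?sqr_ge0 //.
by rewrite mulr_ge0 ?(ltW (t_gt0 _)) ?ltW.
Qed.

Lemma sufficient_descent k : ~~ null_step k ->
  dot (grad f (x k)) (d k) <= - enorm (d k) ^+ 2.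
Proof.
move=> desck; have [_ dn rd dk] := descent_step_facts desck.
have [epsk rk] := eps_r_gt0 k.
have gk : 0 < enorm (g k) by move: rd; rewrite dn; lra.
have err : dot (grad f (x k) - g k) (d k) <= eps k * enorm (d k).
  by apply: le_trans (dot_le_enorm _ _) _; rewrite ler_wpM2r ?enorm_ge0 // enorm_distC g_close.
have gd : dot (g k) (d k) = - ((enorm (g k) - eps k) * enorm (g k)).
  by rewrite dk dotZr -sqr_enorm; field; rewrite gt_eqF.
by rewrite -[grad f (x k)](subrK (g k)) dotDl gd dn; move: err; rewrite dn; nra.
Qed.

Lemma grad_le_d k : ~~ null_step k -> enorm (grad f (x k)) <= c_grad * enorm (d k).
Proof.
move=> desck; have [_ dn rd _] := descent_step_facts desck.
have := grad_le_g k; have := eps_le_r k; rewrite /c_grad.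
have : 0 <= eps 0 / r 0 by rewrite divr_ge0 // ltW // (eps_gt0, r_gt0).
by move: rd; rewrite dn; nra.
Qed.

Lemma d_le_grad k : ~~ null_step k -> enorm (d k) <= enorm (grad f (x k)).
Proof.
move=> desck; have [_ dn _ _] := descent_step_facts desck.
have := ler_enormD (grad f (x k)) (g k - grad f (x k)); rewrite addrC subrK.
by have := g_close k; rewrite dn; lra.
Qed.

Lemma backtracking_fails k : ~~ null_step k -> t k < 1 ->
  ~ armijo f beta (x k) (d k) (t k / gamma).
Proof.
move=> desck; have [_ _ rd _] := descent_step_facts desck.
have dk0 : d k != 0 by apply: contraTneq rd => ->; rewrite enorm0 -leNgt ltW ?r_gt0.
case: (irg_step k) => _ _; rewrite (negPf dk0) => -[[|j] [-> _ no_armijo]] _.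
  by rewrite ltxx.
by move=> _; rewrite exprS [gamma * _]mulrC mulfK ?gt_eqF //; apply: no_armijo.
Qed.

Lemma r_cvg0 : (forall N, exists2 k, (N <= k)%N & null_step k) -> r @ \oo --> 0.
Proof.
move=> nulls; have r_geo j : exists N, forall k, (N <= k)%N -> r k <= mu ^+ j * r 0.
  elim: j => [|j [N rN]]; first by exists 0%N => k _; rewrite expr0 mul1r r_nonincr.
  have [k Nk nullk] := nulls N; exists k.+1 => m km.
  apply: le_trans (r_nonincr km) _; move: nullk; rewrite /null_step => nullk.
  case: (irg_step k) => _; rewrite nullk => -[-> _ _] _ _.
  by rewrite exprS -mulrA ler_pM2l // rN.
apply/cvgrPdist_lt => e e0.
have mu_lt1 : `|mu| < 1 by rewrite gtr0_norm //; case/andP: mu01.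
have /cvgrPdist_lt /(_ _ (divr_gt0 e0 (r_gt0 0))) [j _ /(_ j (leqnn j)) /=] :=
  cvg_expr mu_lt1.
rewrite sub0r normrN ger0_norm ?exprn_ge0 ?ltW // ltr_pdivlMr ?r_gt0 // => muj.
have [N rN] := r_geo j; exists N => // k /rN rk.
by rewrite sub0r normrN gtr0_norm ?r_gt0 // (le_lt_trans rk).
Qed.

Lemma r_const N : (forall k, (N <= k)%N -> ~~ null_step k) ->
  forall k, (N <= k)%N -> r k = r N.
Proof.
move=> desc k /subnK <-; elim: (k - N)%N => [|i IH]; first by rewrite add0n.
by have [rS _ _ _] := descent_step_facts (desc _ (leq_addl i N)); rewrite addSn rS.
Qed.

Variable xbar : 'rV[R]_n.
Hypothesis xbar_acc : accumulation_point x xbar.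

Let f_cont : f @ xbar --> f xbar.
Proof. exact/differentiable_continuous/(proj1 f_C1). Qed.

Let grad_cont : grad f @ xbar --> grad f xbar.
Proof. exact: (proj2 f_C1). Qed.

Lemma f_ge_limit k : f xbar <= f (x k).
Proof.
rewrite leNgt; apply/negP => fk.
have /cvgrPdist_lt /(_ (f xbar - f (x k))) := f_cont.
rewrite subr_gt0 => /(_ fk) /nbhs_enorm_ball [del del0 f_near].
have [m [km xm]] := xbar_acc (enorm_ball_nbhs xbar del0) k.
by have := f_near _ xm; have := f_nonincr km; rewrite ltr_norml; lra.
Qed.

Lemma f_near_limit e : 0 < e -> \forall k \near \oo, f (x k) - f xbar < e.
Proof.
move=> e0; have /cvgrPdist_lt /(_ e e0) /nbhs_enorm_ball [del del0 f_near] := f_cont.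
have [K [_ xK]] := xbar_acc (enorm_ball_nbhs xbar del0) 0.
exists K => // k /= /f_nonincr fk.
by have := f_near _ xK; rewrite ltr_norml; lra.
Qed.

Lemma step_size_lt k : ~~ null_step k -> beta * t k * r k ^+ 2 < f (x k) - f xbar.
Proof.
move=> desck; have [_ _ rd _] := descent_step_facts desck.
have := descent k; have := f_ge_limit k.+1.
have : beta * t k * r k ^+ 2 < beta * t k * enorm (d k) ^+ 2.
  by rewrite ltr_pM2l ?mulr_gt0 ?t_gt0 // ltrXn2r // ltW ?r_gt0.
lra.
Qed.

Lemma t_cvg0 N : (forall k, (N <= k)%N -> ~~ null_step k) -> t @ \oo --> 0.
Proof.
move=> desc; apply/cvgrPdist_lt => e e0.
have c_gt0 : 0 < beta * r N ^+ 2 by rewrite mulr_gt0 ?exprn_gt0 ?r_gt0.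
have [K _ fK] := f_near_limit (mulr_gt0 c_gt0 e0).
exists (maxn N K) => // k; rewrite /= geq_max => /andP[Nk Kk].
have := step_size_lt (desc k Nk); rewrite (r_const desc Nk) => tk.
rewrite sub0r normrN gtr0_norm ?t_gt0 // -(ltr_pM2l c_gt0).
by apply: lt_trans (fK k Kk); rewrite mulrAC.
Qed.

Section KLConvergence.
Variables (eta : R) (U : set 'rV[R]_n) (psi : R -> R).
Hypotheses (eta_gt0 : 0 < eta) (U_nbhs : nbhs xbar U)
  (psi_nondecr : {in `]0, eta[ &, {homo psi : s t / s <= t}})
  (psi_gt0 : forall t, 0 < t < eta -> 0 < psi t)
  (inv_psi_int : lebesgue_measure.-integrable `]0, eta[ (fun t => ((psi t)^-1)%:E))
  (KL : forall y, U y -> f xbar < f y < f xbar + eta ->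
           psi (f y - f xbar) <= enorm (grad f y)).

Let a k := f (x k) - f xbar.
Let Phi := desing psi.
Let c_KL := c_grad / beta.

Let a_ge0 k : 0 <= a k. Proof. by rewrite subr_ge0 f_ge_limit. Qed.
Let a_nonincr k : a k.+1 <= a k. Proof. by rewrite lerD2r f_nonincr. Qed.
Let Phi_nonincr k : a k < eta -> Phi (a k.+1) <= Phi (a k).
Proof.
by move=> ak; apply: (desing_le psi_nondecr psi_gt0 inv_psi_int (a_ge0 _) (a_nonincr k)).
Qed.
Let c_KL_gt0 : 0 < c_KL.
Proof. by rewrite divr_gt0 // c_grad_gt0. Qed.

(* The KL inequality turns the sufficient decrease into a bound on the step
   length by the decrease of Phi o a, which telescopes. *)
Lemma step_le_desing k : U (x k) -> a k < eta ->
  enorm (x k.+1 - x k) <= c_KL * (Phi (a k) - Phi (a k.+1)).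
Proof.
move=> Uk ak_lt; rewrite xS addrC addKr enormZ gtr0_norm ?t_gt0 //.
have [nullk|desck] := boolP (null_step k).
  have [-> _ _] := null_step_facts nullk.
  by rewrite enorm0 mulr0 mulr_ge0 ?subr_ge0 ?Phi_nonincr // ltW.
have [_ _ rd _] := descent_step_facts desck.
set D := enorm (d k) in rd *; have D_gt0 : 0 < D := lt_trans (r_gt0 k) rd.
have dec : beta * t k * D ^+ 2 <= a k - a k.+1 by have := descent k; rewrite -/D /a; lra.
have dec_gt0 : 0 < beta * t k * D ^+ 2 by rewrite !mulr_gt0 ?t_gt0.
have ak_gt0 : 0 < a k by have := a_ge0 k.+1; lra.
have psi_le : psi (a k) <= c_grad * D.
  by apply: le_trans (grad_le_d desck); apply: KL => //; rewrite -subr_gt0 ak_gt0 -ltrBlDl.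
have := desing_diff_ge psi_nondecr psi_gt0 inv_psi_int (a_ge0 k.+1) (a_nonincr k) ak_lt ak_gt0.
rewrite -/Phi ler_pdivrMr ?psi_gt0 ?ak_gt0 // => diff.
have Phi_ge : 0 <= Phi (a k) - Phi (a k.+1) by rewrite subr_ge0 Phi_nonincr.
rewrite /c_KL mulrAC ler_pdivlMr // -(ler_pM2r D_gt0).
by have := ler_wpM2l Phi_ge psi_le; nra.
Qed.

Lemma iterates_stay (rr : R) K : (forall y, enorm (y - xbar) < rr -> U y) ->
  enorm (x K - xbar) < rr / 2 -> a K < eta -> c_KL * Phi (a K) < rr / 2 ->
  forall k, (K <= k)%N ->
  enorm (x k - x K) <= c_KL * (Phi (a K) - Phi (a k)) /\ enorm (x k - xbar) < rr.
Proof.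
move=> ballU xK aK PhiK k /subnK <-; elim: (k - K)%N => [|i [IH1 IH2]].
  by rewrite add0n !subrr enorm0 mulr0; have := enorm_ge0 (x K - xbar); lra.
have ai_lt : a (i + K)%N < eta by apply: le_lt_trans aK; rewrite lerD2r f_nonincr ?leq_addl.
have step := step_le_desing (ballU _ IH2) ai_lt.
have Phi_ge0 : 0 <= c_KL * Phi (a (i + K).+1).
  by rewrite mulr_ge0 ?(ltW c_KL_gt0) // (desing_ge0 psi_gt0) // (le_lt_trans (a_nonincr _)).
have len : enorm (x (i.+1 + K)%N - x K) <= c_KL * (Phi (a K) - Phi (a (i.+1 + K)%N)).
  rewrite addSn; apply: le_trans (ler_enorm_distD _ (x (i + K)%N) _) _.
  by move: step IH1; rewrite !mulrBr; lra.
split=> //; apply: le_lt_trans (ler_enorm_distD _ (x K) _) _.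
by move: len PhiK xK Phi_ge0; rewrite mulrBr; lra.
Qed.

Lemma cvg_iterates_KL : x @ \oo --> xbar.
Proof.
have [rU rU_gt0 ballU] := nbhs_enorm_ball U_nbhs.
apply/cvgrPdist_lt => e e0; set rr := Num.min e rU.
have rr_gt0 : 0 < rr by rewrite lt_min e0 rU_gt0.
have ballU' y : enorm (y - xbar) < rr -> U y.
  by move=> yr; apply: ballU; apply: lt_le_trans yr _; rewrite ge_min lexx orbT.
have rr2 : 0 < rr / 2 by rewrite divr_gt0.
have [del del0 Phi_small] := desing_small psi_gt0 inv_psi_int (divr_gt0 rr2 c_KL_gt0).
have min_gt0 : 0 < Num.min eta del by rewrite lt_min eta_gt0.
have [N _ aN] := f_near_limit min_gt0.
have [K [NK xK]] := xbar_acc (enorm_ball_nbhs xbar rr2) N.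
move: (aN K NK); rewrite lt_min => /andP[aK_eta aK_del].
have PhiK : c_KL * Phi (a K) < rr / 2.
  by rewrite mulrC -ltr_pdivlMr // Phi_small.
exists K => // k /= Kk; have [_ xk] := iterates_stay ballU' xK aK_eta PhiK Kk.
rewrite -normrN opprB (le_lt_trans (mxnorm_le_enorm _)) //.
by apply: lt_le_trans xk _; rewrite ge_min lexx.
Qed.

End KLConvergence.

Hypothesis x_cvg : x @ \oo --> xbar.

Lemma grad_eq0_of_null_steps :
  (forall N, exists2 k, (N <= k)%N & null_step k) -> grad f xbar = 0.
Proof.
move=> nulls; apply: enorm_eq0; apply/eqP; rewrite eq_le enorm_ge0 andbT.
apply/ler_addgt0Pr => e e0; rewrite add0r; have e2 : 0 < e / 2 by rewrite divr_gt0.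
have grad_x : \forall k \near \oo, enorm (grad f (x k) - grad f xbar) < e / 2.
  exact: cvg_enorm_lt (cvg_comp _ _ x_cvg grad_cont) _ e2.
have /cvgrPdist_lt /(_ _ (divr_gt0 e2 c_grad_gt0)) r_small := r_cvg0 nulls.
have [N _ near_N] := filterI grad_x r_small.
have [k /near_N [/= gk rk] nullk] := nulls N.
have [_ _ grad_k] := null_step_facts nullk.
move: rk; rewrite sub0r normrN gtr0_norm ?r_gt0 // ltr_pdivlMr ?c_grad_gt0 //.
have := ler_enorm_distD (grad f xbar) (grad f (x k)) 0; rewrite !subr0 enorm_distC.
by move: gk grad_k; rewrite mulrC; lra.
Qed.

Lemma not_eventually_descent N : ~ (forall k, (N <= k)%N -> ~~ null_step k).
Proof.
move=> desc; have rN := r_gt0 N; set G := enorm (grad f xbar) + 1.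
have G_gt0 : 0 < G by rewrite ltr_wpDl ?enorm_ge0.
have gap_gt0 : 0 < Num.min 1 ((1 - beta) * r N / 2).
  by rewrite lt_min ltr01 !divr_gt0 ?mulr_gt0 // subr_gt0; case/andP: beta01.
have [del del0 grad_near] : exists2 del, 0 < del & forall y, enorm (y - xbar) < del ->
    enorm (grad f y - grad f xbar) < Num.min 1 ((1 - beta) * r N / 2).
  exact/nbhs_enorm_ball/(cvg_enorm_lt grad_cont).
have Tm_gt0 : 0 < Num.min 1 (gamma * del / (2 * G)).
  by rewrite lt_min ltr01 divr_gt0 ?mulr_gt0.
have /cvgrPdist_lt /(_ _ Tm_gt0) t_small := t_cvg0 desc.
near \oo => K.
have NK : (N <= K)%N by near: K; exact: nbhs_infty_ge.
have xK : enorm (x K - xbar) < del / 2.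
  by near: K; apply: (cvg_enorm_lt x_cvg); rewrite divr_gt0.
have tK : t K < Num.min 1 (gamma * del / (2 * G)).
  by near: K; apply: filterS t_small => k; rewrite sub0r normrN gtr0_norm ?t_gt0.
move: tK; rewrite lt_min => /andP[tK1 tK_small].
have descK := desc K NK; have [_ _ rd _] := descent_step_facts descK.
rewrite (r_const desc NK) in rd.
have [u /andP[u0 u_lt] gap] := not_armijo_grad_gap (proj1 f_C1)
  (divr_gt0 (t_gt0 K) gamma_gt0) (lt_trans rN rd) (sufficient_descent descK)
  (backtracking_fails descK tK1).
have step_small : t K / gamma * G < del / 2.
  rewrite mulrAC ltr_pdivrMr // -ltr_pdivlMr //.
  suff -> : del / 2 * gamma / G = gamma * del / (2 * G) by [].
  by field; rewrite gt_eqF.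
have /grad_near : enorm (x K - xbar) < del by move: xK; lra.
rewrite lt_min => /andP[gK1 gK].
have dK_lt : enorm (d K) < G.
  have := ler_enorm_distD (grad f (x K)) (grad f xbar) 0; rewrite !subr0.
  by have := d_le_grad descK; move: gK1; rewrite /G; lra.
have /grad_near : enorm (x K + u *: d K - xbar) < del.
  rewrite addrAC (le_lt_trans (ler_enormD _ _)) // enormZ gtr0_norm //.
  have : u * enorm (d K) < t K / gamma * G by rewrite ltr_pM ?enorm_ge0 ?ltW.
  by move: xK step_small; lra.
rewrite lt_min => /andP[_ gxi].
have := ler_enorm_distD (grad f (x K + u *: d K)) (grad f xbar) (grad f (x K)).
rewrite [enorm (grad f xbar - _)]enorm_distC.
have : (1 - beta) * r N < (1 - beta) * enorm (d K).
  by rewrite ltr_pM2l // subr_gt0; case/andP: beta01.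
by move: gap gxi gK; lra.
Unshelve. all: by end_near.
Qed.

Lemma grad_eq0_of_cvg : grad f xbar = 0.
Proof.
have [nulls|] := pselect (forall N, exists2 k, (N <= k)%N & null_step k).
  exact: grad_eq0_of_null_steps.
move=> /existsNP [N no_null]; case: (not_eventually_descent (N := N)) => k Nk.
by apply/negP => nullk; apply: no_null; exists k.
Qed.

End IRG.

Unset Implicit Arguments.

Theorem mainTheorem13 (R : realType) (n : nat) (f : 'rV[R]_n -> R)
  (mu theta beta gamma tau : R) (rho : nat -> R)
  (x g d : nat -> 'rV[R]_n) (eps r t : nat -> R) (xbar : 'rV[R]_n) :
  C1 f ->
  0 < mu < 1 -> 0 < theta < 1 -> theta < mu ->
  0 < beta < 1 -> 0 < gamma < 1 -> 0 < tau < 1 ->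
  (forall k, 0 < rho k) -> rho @ \oo --> 0 ->
  IRG_backtracking f mu theta beta gamma tau rho x g d eps r t ->
  accumulation_point x xbar ->
  KL_at f xbar ->
  grad f xbar = 0 /\ x @ \oo --> xbar.
Proof.
move=> f_C1 mu01 theta01 theta_lt_mu beta01 gamma01 tau01 _ _ irg xbar_acc
  [eta [U [psi [eta_gt0 U_nbhs [psi_nondecr psi_gt0 inv_psi_int KL]]]]].
have x_cvg := cvg_iterates_KL f_C1 mu01 theta01 theta_lt_mu beta01 gamma01 tau01
  irg xbar_acc eta_gt0 U_nbhs psi_nondecr psi_gt0 inv_psi_int KL.
split; last exact: x_cvg.
apply: (grad_eq0_of_cvg f_C1 mu01 theta01 theta_lt_mu beta01 gamma01 tau01
  irg xbar_acc x_cvg).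
Qed.
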